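(* Let $I$ be an open interval, $h\in\mathbb{R}$, $\Delta:I\to(0,\infty)$ and $V:I\to\mathbb{C}$ smooth, and let $R$ be a $C^2$ solution of $\Delta^{-h}\frac{d}{dr}\left(\Delta^{h+1}\frac{dR}{dr}\right)=VR$ on $I$. Let $\alpha,\beta:I\to\mathbb{C}$ be smooth with $\beta$ nowhere zero, and suppose $$\gamma:=\alpha\left(\alpha+\beta'\Delta^{h+1}\right)-\beta\Delta^{h+1}\left(\alpha'+\beta\Delta^{h}V\right)$$ is nowhere zero on $I$ (primes denote $d/dr$). Define $\chi=\alpha R+\beta\Delta^{h+1}R'$. Then $$\Delta^{-h}\frac{d}{dr}\left(\Delta^{h+1}\chi'\right)-\Delta F\chi'-U\chi=0,$$ where $F=\gamma'/\gamma$ and $U=V+\frac{\Delta^{-h}}{\beta}\left[\left(2\alpha+\beta'\Delta^{h+1}\right)'-F\left(\alpha+\beta'\Delta^{h+1}\right)\right]$. Moreover $\gamma R=(\alpha+\beta'\Delta^{h+1})\chi-\beta\Delta^{h+1}\chi'$ and $\gamma R'=-(\alpha'+\beta\Delta^hV)\chi+\alpha\chi'$. *)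

From Stdlib Require Import Reals Lra.
Open Scope R_scope.

Definition Cx : Type := (R * R)%type.
Definition RtoC (x : R) : Cx := (x, 0).
Definition C0 : Cx := (0, 0).
Definition Cadd (z w : Cx) : Cx := (fst z + fst w, snd z + snd w).
Definition Copp (z : Cx) : Cx := (- fst z, - snd z).
Definition Csub (z w : Cx) : Cx := Cadd z (Copp w).
Definition Cmul (z w : Cx) : Cx :=
  (fst z * fst w - snd z * snd w, fst z * snd w + snd z * fst w).
Definition Cinv (z : Cx) : Cx :=
  let d := fst z * fst z + snd z * snd z in (fst z / d, - snd z / d).
Definition Cdiv (z w : Cx) : Cx := Cmul z (Cinv w).

Declare Scope C_scope.
Delimit Scope C_scope with C.
Infix "+" := Cadd : C_scope.
Infix "-" := Csub : C_scope.
Infix "*" := Cmul : C_scope.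
Infix "/" := Cdiv : C_scope.
Notation "- z" := (Copp z) : C_scope.

Definition in_I (lo hi : option R) (x : R) : Prop :=
  match lo with Some a => a < x | None => True end /\
  match hi with Some b => x < b | None => True end.

Definition cderiv (f : R -> Cx) (x : R) (l : Cx) : Prop :=
  derivable_pt_lim (fun s => fst (f s)) x (fst l) /\
  derivable_pt_lim (fun s => snd (f s)) x (snd l).

Definition ccont (f : R -> Cx) (x : R) : Prop :=
  continuity_pt (fun s => fst (f s)) x /\ continuity_pt (fun s => snd (f s)) x.

Definition smooth_on (I : R -> Prop) (f : R -> R) : Prop :=
  exists D : nat -> R -> R, (forall x, D 0%nat x = f x) /\
    forall (n : nat) (x : R), I x -> derivable_pt_lim (D n) x (D (S n) x).

Definition csmooth_on (I : R -> Prop) (f : R -> Cx) : Prop :=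
  smooth_on I (fun s => fst (f s)) /\ smooth_on I (fun s => snd (f s)).

Definition rpw (x p : R) : Cx := RtoC (Rpower x p).

From Stdlib Require Import Reals Lra Field FunctionalExtensionality.
Open Scope R_scope.

(* The theorem concerns a transformation of solutions of
   the radial equation (P R')' = Q V R with P = Delta^(h+1), Q = Delta^h.
   Writing A = alpha + beta' P and B = alpha' + beta Q V, the equation gives
     chi = alpha R + beta (P R'),      P chi' = P B R + A (P R'),
   an invertible linear change of unknowns with determinant gamma = alpha A - beta P B;
   inverting it yields the two formulas for gamma R and gamma R'.  Differentiating
   P chi' once more and eliminating R, P R' through this inversion produces the
   transformed equation, with F = gamma'/gamma and the stated potential U. *)

Definition Cone : Cx := RtoC 1.

Lemma Cring : ring_theory C0 Cone Cadd Cmul Csub Copp (@eq Cx).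
Proof.
  constructor; intros; repeat match goal with p : Cx |- _ => destruct p end;
  unfold C0, Cone, RtoC, Csub, Cadd, Cmul, Copp; simpl; f_equal; ring.
Qed.

Lemma Cfield : field_theory C0 Cone Cadd Cmul Csub Copp Cdiv Cinv (@eq Cx).
Proof.
  constructor.
  - exact Cring.
  - unfold Cone, C0, RtoC; intro H; inversion H; lra.
  - reflexivity.
  - intros [a b] Hnz. unfold Cinv, Cmul, Cone, RtoC; simpl.
    assert (a * a + b * b <> 0).
    { intro H. apply Hnz. unfold C0.
      assert (a = 0) by nra. assert (b = 0) by nra. subst; reflexivity. }
    f_equal; field; auto.
Qed.

Add Field CxField : Cfield.

Lemma RtoC_two : RtoC 2 = Cadd Cone Cone.
Proof. unfold Cone, RtoC, Cadd; simpl; f_equal; ring. Qed.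

Lemma RtoC_mul (x y : R) : RtoC (x * y) = Cmul (RtoC x) (RtoC y).
Proof. unfold RtoC, Cmul; simpl; f_equal; ring. Qed.

Lemma RtoC_inv (x : R) : x <> 0 -> RtoC (/ x) = Cinv (RtoC x).
Proof. intro Hx. unfold RtoC, Cinv; simpl; f_equal; field; auto. Qed.

Lemma RtoC_neq0 (x : R) : x <> 0 -> RtoC x <> C0.
Proof. intros Hx E; inversion E; auto. Qed.

Lemma cderiv_add (f g : R -> Cx) (x : R) (a b : Cx) :
  cderiv f x a -> cderiv g x b -> cderiv (fun s => Cadd (f s) (g s)) x (Cadd a b).
Proof. intros [] []; split; simpl; apply derivable_pt_lim_plus; auto. Qed.

Lemma cderiv_opp (f : R -> Cx) (x : R) (a : Cx) :
  cderiv f x a -> cderiv (fun s => Copp (f s)) x (Copp a).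
Proof. intros []; split; simpl; apply derivable_pt_lim_opp; auto. Qed.

Lemma cderiv_sub (f g : R -> Cx) (x : R) (a b : Cx) :
  cderiv f x a -> cderiv g x b -> cderiv (fun s => Csub (f s) (g s)) x (Csub a b).
Proof. intros Hf Hg; apply cderiv_add; [exact Hf | apply cderiv_opp; exact Hg]. Qed.

Lemma cderiv_mul (f g : R -> Cx) (x : R) (a b : Cx) :
  cderiv f x a -> cderiv g x b ->
  cderiv (fun s => Cmul (f s) (g s)) x (Cadd (Cmul a (g x)) (Cmul (f x) b)).
Proof.
  intros [Hf1 Hf2] [Hg1 Hg2]; split; simpl.
  - replace (fst a * fst (g x) - snd a * snd (g x) + (fst (f x) * fst b - snd (f x) * snd b))
      with ((fst a * fst (g x) + fst (f x) * fst b) - (snd a * snd (g x) + snd (f x) * snd b))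
      by ring.
    apply derivable_pt_lim_minus; apply derivable_pt_lim_mult; auto.
  - replace (fst a * snd (g x) + snd a * fst (g x) + (fst (f x) * snd b + snd (f x) * fst b))
      with ((fst a * snd (g x) + fst (f x) * snd b) + (snd a * fst (g x) + snd (f x) * fst b))
      by ring.
    apply derivable_pt_lim_plus; apply derivable_pt_lim_mult; auto.
Qed.

Lemma cderiv_const (c : Cx) (x : R) : cderiv (fun _ => c) x C0.
Proof. split; simpl; apply derivable_pt_lim_const. Qed.

Lemma cderiv_RtoC (f : R -> R) (x l : R) :
  derivable_pt_lim f x l -> cderiv (fun s => RtoC (f s)) x (RtoC l).
Proof. intros; split; simpl; auto; apply derivable_pt_lim_const. Qed.

Lemma cderiv_ext (f g : R -> Cx) (x : R) (l : Cx) :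
  (forall s, f s = g s) -> cderiv f x l -> cderiv g x l.
Proof. intros H; replace g with f; auto; apply functional_extensionality; auto. Qed.

Lemma cderiv_value (f : R -> Cx) (x : R) (l l' : Cx) :
  l = l' -> cderiv f x l -> cderiv f x l'.
Proof. intros; subst; auto. Qed.

Lemma cderiv_unique (f : R -> Cx) (x : R) (a b : Cx) :
  cderiv f x a -> cderiv f x b -> a = b.
Proof.
  intros [H1 H2] [H3 H4]. destruct a, b; simpl in *.
  f_equal; eapply uniqueness_limite; eauto.
Qed.

Ltac cderiv_rules :=
  first [ eassumption
        | apply cderiv_add; [cderiv_rules | cderiv_rules]
        | apply cderiv_sub; [cderiv_rules | cderiv_rules]
        | apply cderiv_mul; [cderiv_rules | cderiv_rules]
        | apply cderiv_const ].

Section Transformation.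
Open Scope C_scope.

Variable I : R -> Prop.
Variables (P Q V Rf R1 alpha beta alpha1 beta1 alpha2 beta2 P1 Q1 V1 : R -> Cx).
Hypothesis HP : forall s, I s -> cderiv P s (P1 s).
Hypothesis HQ : forall s, I s -> cderiv Q s (Q1 s).
Hypothesis HV : forall s, I s -> cderiv V s (V1 s).
Hypothesis HRf : forall s, I s -> cderiv Rf s (R1 s).
Hypothesis Hflux : forall s, I s -> cderiv (fun t => P t * R1 t) s (Q s * V s * Rf s).
Hypothesis Halpha : forall s, I s -> cderiv alpha s (alpha1 s).
Hypothesis Halpha1 : forall s, I s -> cderiv alpha1 s (alpha2 s).
Hypothesis Hbeta : forall s, I s -> cderiv beta s (beta1 s).
Hypothesis Hbeta1 : forall s, I s -> cderiv beta1 s (beta2 s).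

Definition Acoef (s : R) : Cx := alpha s + beta1 s * P s.
Definition Bcoef (s : R) : Cx := alpha1 s + beta s * Q s * V s.
Definition Chi (s : R) : Cx := alpha s * Rf s + beta s * P s * R1 s.
Definition Chi1 (s : R) : Cx := Bcoef s * Rf s + Acoef s * R1 s.

(* gamma is the determinant of the change of unknowns (R, P R') |-> (chi, P chi'). *)
Definition Gam (s : R) : Cx := alpha s * Acoef s - beta s * P s * Bcoef s.

Definition Acoef1 (s : R) : Cx := alpha1 s + beta2 s * P s + beta1 s * P1 s.
Definition Bcoef1 (s : R) : Cx :=
  alpha2 s + beta1 s * Q s * V s + beta s * Q1 s * V s + beta s * Q s * V1 s.
Definition Gam1 (s : R) : Cx :=
  alpha1 s * Acoef s + alpha s * Acoef1 s - (beta1 s * P s + beta s * P1 s) * Bcoef s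
  - beta s * P s * Bcoef1 s.
Definition Flux1 (s : R) : Cx :=
  (P1 s * Bcoef s + P s * Bcoef1 s) * Rf s + P s * Bcoef s * R1 s
  + Acoef1 s * (P s * R1 s) + Acoef s * (Q s * V s * Rf s).
Definition Wcoef (s : R) : Cx := RtoC 2 * alpha1 s + beta2 s * P s + beta1 s * P1 s.

Lemma Acoef_deriv (s : R) : I s -> cderiv Acoef s (Acoef1 s).
Proof.
  intros Hs. specialize (HP s Hs). specialize (Halpha s Hs). specialize (Hbeta1 s Hs).
  eapply cderiv_value; [| unfold Acoef; cderiv_rules]. unfold Acoef1; ring.
Qed.

Lemma Bcoef_deriv (s : R) : I s -> cderiv Bcoef s (Bcoef1 s).
Proof.
  intros Hs. specialize (HQ s Hs). specialize (HV s Hs).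
  specialize (Halpha1 s Hs). specialize (Hbeta s Hs).
  eapply cderiv_value; [| unfold Bcoef; cderiv_rules]. unfold Bcoef1; ring.
Qed.

Lemma Gam_deriv (s : R) : I s -> cderiv Gam s (Gam1 s).
Proof.
  intros Hs. pose proof (Acoef_deriv s Hs). pose proof (Bcoef_deriv s Hs).
  specialize (HP s Hs). specialize (Halpha s Hs). specialize (Hbeta s Hs).
  eapply cderiv_value; [| unfold Gam; cderiv_rules]. unfold Gam1; ring.
Qed.

Lemma Chi_deriv (s : R) : I s -> cderiv Chi s (Chi1 s).
Proof.
  intros Hs. specialize (Hflux s Hs). specialize (HRf s Hs).
  specialize (Halpha s Hs). specialize (Hbeta s Hs).
  apply cderiv_ext with (f := fun t => alpha t * Rf t + beta t * (P t * R1 t)).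
  { intros t; unfold Chi; ring. }
  eapply cderiv_value; [| cderiv_rules]. unfold Chi1, Acoef, Bcoef; ring.
Qed.

(* P chi' = (P B) R + A (P R'), whose last factor is differentiated by the equation. *)
Lemma Flux_deriv (s : R) : I s -> cderiv (fun t => P t * Chi1 t) s (Flux1 s).
Proof.
  intros Hs. pose proof (Acoef_deriv s Hs). pose proof (Bcoef_deriv s Hs).
  specialize (Hflux s Hs). specialize (HRf s Hs). specialize (HP s Hs).
  apply cderiv_ext with (f := fun t => P t * Bcoef t * Rf t + Acoef t * (P t * R1 t)).
  { intros t; unfold Chi1; ring. }
  eapply cderiv_value; [| cderiv_rules]. unfold Flux1; ring.
Qed.

Lemma Wcoef_deriv (s : R) :
  I s -> cderiv (fun t => RtoC 2 * alpha t + beta1 t * P t) s (Wcoef s).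
Proof.
  intros Hs. specialize (HP s Hs). specialize (Halpha s Hs). specialize (Hbeta1 s Hs).
  eapply cderiv_value; [| cderiv_rules]. unfold Wcoef; ring.
Qed.

Lemma Gam_Rf (s : R) : Gam s * Rf s = Acoef s * Chi s - beta s * P s * Chi1 s.
Proof. unfold Gam, Chi, Chi1; ring. Qed.

Lemma Gam_R1 (s : R) : Gam s * R1 s = - Bcoef s * Chi s + alpha s * Chi1 s.
Proof. unfold Gam, Chi, Chi1; ring. Qed.

Lemma transformed_equation (s : R) (D : Cx) :
  P s = D * Q s -> Q s <> C0 -> beta s <> C0 -> Gam s <> C0 ->
  let F := Gam1 s / Gam s in
  let U := V s + Cinv (Q s) / beta s * (Wcoef s - F * Acoef s) in
  Cinv (Q s) * Flux1 s - D * F * Chi1 s - U * Chi s = C0.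
Proof.
  intros HPQ HQ0 Hb0 Hg0 F U. subst F U.
  unfold Gam in *. unfold Gam1, Wcoef, Flux1, Chi, Chi1, Acoef1, Bcoef1, Acoef, Bcoef in *.
  rewrite RtoC_two, HPQ in *. field. auto.
Qed.

End Transformation.

Lemma rpw_neq0 (x p : R) : rpw x p <> C0.
Proof. apply RtoC_neq0. unfold Rpower. apply Rgt_not_eq, exp_pos. Qed.

Lemma rpw_succ (x p : R) : 0 < x -> rpw x (p + 1) = Cmul (RtoC x) (rpw x p).
Proof.
  intros Hx. unfold rpw. rewrite Rpower_plus, Rpower_1, RtoC_mul by exact Hx.
  apply Cring.
Qed.

Lemma rpw_opp (x p : R) : rpw x (- p) = Cinv (rpw x p).
Proof.
  unfold rpw. rewrite Rpower_Ropp. apply RtoC_inv.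
  unfold Rpower. apply Rgt_not_eq, exp_pos.
Qed.

Lemma rpw_opp_solve (x p : R) (G W : Cx) :
  Cmul (rpw x (- p)) G = W -> G = Cmul (rpw x p) W.
Proof. intros E. subst W. rewrite rpw_opp. field. apply rpw_neq0. Qed.

Lemma rpw_deriv (D : R -> R) (x d p : R) :
  0 < D x -> derivable_pt_lim D x d ->
  cderiv (fun s => rpw (D s) p) x (RtoC (p * Rpower (D x) (p - 1) * d)).
Proof.
  intros Hpos Hd. apply cderiv_RtoC.
  apply (derivable_pt_lim_comp D (fun y => Rpower y p)); auto.
  apply derivable_pt_lim_power; auto.
Qed.

Lemma smooth_derivs (I : R -> Prop) (f : R -> R) :
  smooth_on I f -> exists f1 f2 : R -> R,
    forall x, I x -> derivable_pt_lim f x (f1 x) /\ derivable_pt_lim f1 x (f2 x).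
Proof.
  intros (D & HD0 & HD). exists (D 1%nat), (D 2%nat). intros x Hx. split; [| auto].
  replace f with (D 0%nat) by (apply functional_extensionality; auto). auto.
Qed.

Lemma csmooth_derivs (I : R -> Prop) (f : R -> Cx) :
  csmooth_on I f -> exists f1 f2 : R -> Cx,
    forall x, I x -> cderiv f x (f1 x) /\ cderiv f1 x (f2 x).
Proof.
  intros [Hre Him].
  destruct (smooth_derivs I _ Hre) as (u1 & u2 & Hu).
  destruct (smooth_derivs I _ Him) as (v1 & v2 & Hv).
  exists (fun s => (u1 s, v1 s)), (fun s => (u2 s, v2 s)). intros x Hx.
  split; split; simpl; apply Hu || apply Hv; exact Hx.
Qed.

Lemma in_I_nbhd (lo hi : option R) (x : R) :
  in_I lo hi x -> exists a b, a < x < b /\ forall z, a < z < b -> in_I lo hi z.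
Proof.
  intros [Hlo Hhi].
  exists (match lo with Some a => a | None => x - 1 end).
  exists (match hi with Some b => b | None => x + 1 end).
  split.
  - destruct lo, hi; split; lra.
  - intros z [Hz1 Hz2]; split; destruct lo, hi; simpl in *; auto.
Qed.

Lemma cderiv_local (lo hi : option R) (f g : R -> Cx) (x : R) (l : Cx) :
  in_I lo hi x -> (forall s, in_I lo hi s -> f s = g s) -> cderiv f x l -> cderiv g x l.
Proof.
  intros Hx Hfg [Hre Him]. destruct (in_I_nbhd lo hi x Hx) as (a & b & Hab & Hin).
  split; eapply derivable_pt_lim_locally_ext; eauto;
    intros z Hz; cbv beta; rewrite Hfg; auto.
Qed.

Lemma csmooth_deriv_deriv (lo hi : option R) (f f1 : R -> Cx) :
  csmooth_on (in_I lo hi) f -> (forall x, in_I lo hi x -> cderiv f x (f1 x)) ->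
  exists f2 : R -> Cx, forall x, in_I lo hi x -> cderiv f1 x (f2 x).
Proof.
  intros Hsm Hf1. destruct (csmooth_derivs _ f Hsm) as (g1 & g2 & Hg).
  exists g2. intros x Hx. apply (cderiv_local lo hi g1); auto; [| apply Hg; auto].
  intros s Hs. eapply cderiv_unique; [apply Hg | apply Hf1]; auto.
Qed.

Theorem mainTheorem3
  (lo hi : option R)
  (Hlohi : match lo, hi with Some a, Some b => a < b | _, _ => True end)
  (h : R) (Delta : R -> R) (V : R -> Cx)
  (HDsm : smooth_on (in_I lo hi) Delta)
  (HDpos : forall r, in_I lo hi r -> 0 < Delta r)
  (HVsm : csmooth_on (in_I lo hi) V)
  (Rf R1 : R -> Cx)
  (HR1 : forall r, in_I lo hi r -> cderiv Rf r (R1 r))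
  (HR2 : exists R2 : R -> Cx, forall r, in_I lo hi r -> cderiv R1 r (R2 r) /\ ccont R2 r)
  (Hode : forall r, in_I lo hi r -> exists G : Cx,
      cderiv (fun s => (rpw (Delta s) (h + 1) * R1 s)%C) r G /\
      (rpw (Delta r) (- h) * G)%C = (V r * Rf r)%C)
  (alpha beta alpha1 beta1 : R -> Cx)
  (Hasm : csmooth_on (in_I lo hi) alpha)
  (Hbsm : csmooth_on (in_I lo hi) beta)
  (Ha1 : forall r, in_I lo hi r -> cderiv alpha r (alpha1 r))
  (Hb1 : forall r, in_I lo hi r -> cderiv beta r (beta1 r))
  (Hbnz : forall r, in_I lo hi r -> beta r <> C0) :
  let gamma := fun r =>
    (alpha r * (alpha r + beta1 r * rpw (Delta r) (h + 1))
     - beta r * rpw (Delta r) (h + 1)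
         * (alpha1 r + beta r * rpw (Delta r) h * V r))%C in
  (forall r, in_I lo hi r -> gamma r <> C0) ->
  let chi := fun r => (alpha r * Rf r + beta r * rpw (Delta r) (h + 1) * R1 r)%C in
  exists (chi1 G gamma1 W : R -> Cx),
    (forall r, in_I lo hi r -> cderiv chi r (chi1 r)) /\
    (forall r, in_I lo hi r ->
       cderiv (fun s => (rpw (Delta s) (h + 1) * chi1 s)%C) r (G r)) /\
    (forall r, in_I lo hi r -> cderiv gamma r (gamma1 r)) /\
    (forall r, in_I lo hi r ->
       cderiv (fun s => (RtoC 2 * alpha s + beta1 s * rpw (Delta s) (h + 1))%C) r (W r)) /\
    (forall r, in_I lo hi r ->
       let F := (gamma1 r / gamma r)%C in
       let U := (V r + rpw (Delta r) (- h) / beta r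
                   * (W r - F * (alpha r + beta1 r * rpw (Delta r) (h + 1))))%C in
       (rpw (Delta r) (- h) * G r - RtoC (Delta r) * F * chi1 r - U * chi r)%C = C0 /\
       (gamma r * Rf r)%C =
         ((alpha r + beta1 r * rpw (Delta r) (h + 1)) * chi r
          - beta r * rpw (Delta r) (h + 1) * chi1 r)%C /\
       (gamma r * R1 r)%C =
         (- (alpha1 r + beta r * rpw (Delta r) h * V r) * chi r + alpha r * chi1 r)%C).
Proof.
  intros gamma Hgamma chi.
  set (I := in_I lo hi).
  set (P := fun s => rpw (Delta s) (h + 1)).
  set (Q := fun s => rpw (Delta s) h).
  destruct (smooth_derivs I Delta HDsm) as (D1 & D2 & HDelta).
  destruct (csmooth_derivs I V HVsm) as (V1 & V2 & HVs).
  destruct (csmooth_deriv_deriv lo hi alpha alpha1 Hasm Ha1) as (alpha2 & Ha2).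
  destruct (csmooth_deriv_deriv lo hi beta beta1 Hbsm Hb1) as (beta2 & Hb2).
  set (P1 := fun s => RtoC ((h + 1) * Rpower (Delta s) (h + 1 - 1) * D1 s)).
  set (Q1 := fun s => RtoC (h * Rpower (Delta s) (h - 1) * D1 s)).
  assert (HP : forall s, I s -> cderiv P s (P1 s)).
  { intros s Hs; apply rpw_deriv; [apply HDpos, Hs | apply (HDelta s Hs)]. }
  assert (HQ : forall s, I s -> cderiv Q s (Q1 s)).
  { intros s Hs; apply rpw_deriv; [apply HDpos, Hs | apply (HDelta s Hs)]. }
  assert (HV : forall s, I s -> cderiv V s (V1 s)) by (intros s Hs; apply (HVs s Hs)).
  assert (Hflux : forall s, I s -> cderiv (fun t => (P t * R1 t)%C) s (Q s * V s * Rf s)%C).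
  { intros s Hs. destruct (Hode s Hs) as (G & HG & EG).
    eapply cderiv_value; [| exact HG].
    rewrite (rpw_opp_solve _ _ _ _ EG). unfold Q; ring. }
  exists (Chi1 P Q V Rf R1 alpha beta alpha1 beta1),
    (Flux1 P Q V Rf R1 alpha beta alpha1 beta1 alpha2 beta2 P1 Q1 V1),
    (Gam1 P Q V alpha beta alpha1 beta1 alpha2 beta2 P1 Q1 V1),
    (Wcoef P alpha1 beta1 beta2 P1).
  split; [exact (Chi_deriv I P Q V Rf R1 alpha beta alpha1 beta1 HR1 Hflux Ha1 Hb1) |].
  split; [exact (Flux_deriv I P Q V Rf R1 alpha beta alpha1 beta1 alpha2 beta2 P1 Q1 V1
                   HP HQ HV HR1 Hflux Ha1 Ha2 Hb1 Hb2) |].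
  split; [exact (Gam_deriv I P Q V alpha beta alpha1 beta1 alpha2 beta2 P1 Q1 V1
                   HP HQ HV Ha1 Ha2 Hb1 Hb2) |].
  split; [exact (Wcoef_deriv I P alpha alpha1 beta1 beta2 P1 HP Ha1 Hb2) |].
  intros r Hr. rewrite (rpw_opp (Delta r) h).
  split; [| split; [exact (Gam_Rf P Q V Rf R1 alpha beta alpha1 beta1 r)
                   | exact (Gam_R1 P Q V Rf R1 alpha beta alpha1 beta1 r)]].
  exact (transformed_equation P Q V Rf R1 alpha beta alpha1 beta1 alpha2 beta2 P1 Q1 V1
           r (RtoC (Delta r)) (rpw_succ (Delta r) h (HDpos r Hr)) (rpw_neq0 (Delta r) h)
           (Hbnz r Hr) (Hgamma r Hr)).
Qed.
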